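(* For every generic game $G=(\hat P,\hat Q,\hat U)$ with players $p_1,\dots,p_n$, actions $q_1,\dots,q_m$ and utility functions $\hat u_i:\hat Q^n\to\mathbb R$, there exists a cGAP $\Pi$ whose vertices (players) are $p_1,\dots,p_n$ and whose VC rule has size $m$ (action $q_j$ identified with choice $j$) such that the strong equilibria of $\Pi$ coincide with the (pure-strategy) Nash equilibria of $G$: for every state (strategy profile) $S$, $\mathcal{MM}(\Pi_S)$ is a strong equilibrium of $\Pi$ if and only if $S$ is a Nash equilibrium of $G$, and every strong equilibrium of $\Pi$ is of the form $\mathcal{MM}(\Pi_S)$ for some state $S$.
   Context: Fix disjoint sets of unary vertex predicate symbols and binary edge predicate symbols; constants are the vertices (players). An annotation is an element of $[0,1]$, an annotation variable (ranging over $[0,1]$), or $f(t_1,\dots,t_k)$ for an annotation function symbol $f$ denoting a fixed function $[0,1]^k\to[0,1]$. An annotated rule has the form $A_0:f(\mu_1,\dots,\mu_n)\leftarrow A_1:\mu_1,\dots,A_n:\mu_n$ ($n=0$: a fact); a GAP is a finite set of such rules. A vertex choice (VC) rule of size $m$ is $b_1(X),\dots,b_m(X)\hookleftarrow a_1(X),\dots,a_m(X)$ with $a_i,b_i$ vertex predicate symbols. A choice GAP (cGAP) $\Pi$ is a finite set of annotated rules plus exactly one VC rule. An interpretation is a map $I$ from ground atoms to $[0,1]$, ordered pointwise. $I\models A:\mu$ iff $I(A)\ge\mu$; $I$ satisfies a ground annotated rule iff its head atom gets at least the head annotation or some body annotated atom is not satisfied; $I$ satisfies a ground VC rule $B_1,\dots,B_m\hookleftarrow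 A_1,\dots,A_m$ iff there is $i$ with $I(B_i)=I(A_i)$ and $I(B_j)=0$ for $j\neq i$; models satisfy all ground instances of all rules. Every GAP $P$ has a unique minimal model $\mathcal{MM}(P)$. ${\rm coh}(\Pi,I)$ is the GAP of all ground non-VC rules of $\Pi$ plus, for each ground VC-rule instance and each $i$ with $I(A_i(v))>0$ and $I(A_i(v))=I(B_i(v))$, the rule $B_i(v):\mu\leftarrow A_i(v):\mu$; a model $M$ is coherent iff $M=\mathcal{MM}({\rm coh}(\Pi,M))$. A coherent model $I$ is a strong equilibrium iff for every ground VC-rule instance $B_1,\dots,B_m\hookleftarrow A_1,\dots,A_m$, $\sum_{i}I(B_i)=\max_i I(A_i)$. A state is a map $S$ from players to $\{1,\dots,m\}$; the induced ground GAP $\Pi_S$ replaces each ground VC-rule instance for vertex $v$ by $b_i(v):\mu\leftarrow a_i(v):\mu$ with $i=S(v)$ and keeps all other ground rules. A generic game is $G=(\hat P,\hat Q,\hat U)$; a profile $s\in\hat Q^n$ is a Nash equilibrium iff no player $p_i$ can increase $\hat u_i$ by changing only its own action. *)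

From Stdlib Require Import Reals.
From mathcomp Require Import all_boot.

Set Implicit Arguments.
Unset Strict Implicit.
Unset Printing Implicit Defensive.

Inductive term (V : Type) := TVar (x : nat) | TCst (v : V).

(* atoms: vertex predicate symbols and edge predicate symbols are two
   disjoint copies of nat (distinguished by the constructor). *)
Inductive atom (V : Type) :=
| VA (p : nat) (t : term V)
| EA (p : nat) (t1 t2 : term V).

Inductive gatom (V : Type) :=
| GVA (p : nat) (v : V)
| GEA (p : nat) (v w : V).

Inductive annot :=
| ACst (c : R)
| AVar (x : nat)
| AFun (f : list R -> R) (ts : list annot).

Fixpoint aeval (s : nat -> R) (t : annot) : R :=
  match t with
  | ACst c => c
  | AVar x => s x
  | AFun f ts =>
      f ((fix go (l : list annot) : list R :=
            match l with nil => nil | cons t l => cons (aeval s t) (go l) end) ts)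
  end.

Definition in01 (x : R) : Prop := Rle R0 x /\ Rle x R1.

Definition fun01 (f : list R -> R) : Prop :=
  forall xs : list R, (forall x, List.In x xs -> in01 x) -> in01 (f xs).

Fixpoint wf_annot (t : annot) : Prop :=
  match t with
  | ACst c => in01 c
  | AVar _ => True
  | AFun f ts =>
      fun01 f /\
      (fix go (l : list annot) : Prop :=
         match l with nil => True | cons t l => wf_annot t /\ go l end) ts
  end.

(* annotated rule  head : hfun(mu_1,...,mu_n) <- A_1:mu_1, ..., A_n:mu_n *)
Record arule (V : Type) := ARule {
  rhead : atom V;
  rfun  : list R -> R;
  rbody : list (atom V * annot) }.

Definition wf_rule V (r : arule V) : Prop :=
  fun01 (rfun r) /\ forall Am, List.In Am (rbody r) -> wf_annot Am.2.

(* cGAP: finite set of annotated rules plus exactly one VC rule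
   b_1(X),...,b_m(X) <-' a_1(X),...,a_m(X), stored as the list of pairs
   (a_i, b_i) of vertex predicate symbols; its size is m. *)
Record cgap (V : Type) := CGap {
  crules : list (arule V);
  cvc    : list (nat * nat) }.

Definition wf_cgap V (P : cgap V) : Prop :=
  forall r, List.In r (crules P) -> wf_rule r.

Definition vc_a (vc : list (nat * nat)) (i : nat) : nat := (nth (0%N, 0%N) vc i).1.
Definition vc_b (vc : list (nat * nat)) (i : nat) : nat := (nth (0%N, 0%N) vc i).2.

Definition interp (V : Type) := gatom V -> R.

Definition valid V (I : interp V) : Prop := forall A, in01 (I A).

Definition inst_term V (th : nat -> V) (t : term V) : V :=
  match t with TVar x => th x | TCst v => v end.

Definition inst_atom V (th : nat -> V) (A : atom V) : gatom V :=
  match A with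
  | VA p t => GVA p (inst_term th t)
  | EA p t1 t2 => GEA p (inst_term th t1) (inst_term th t2)
  end.

Definition sat_rule V (I : interp V) (r : arule V) : Prop :=
  forall (th : nat -> V) (s : nat -> R), (forall x, in01 (s x)) ->
    (forall Am, List.In Am (rbody r) -> (Rle (aeval s Am.2) (I (inst_atom th Am.1)))) ->
    (Rle (rfun r (map (fun Am => aeval s Am.2) (rbody r))) (I (inst_atom th (rhead r)))).

Definition gap (V : Type) := arule V -> Prop.

Definition gap_model V (P : gap V) (I : interp V) : Prop :=
  valid I /\ forall r, P r -> sat_rule I r.

Definition least_model V (P : gap V) (M : interp V) : Prop :=
  gap_model P M /\ forall I, gap_model P I -> forall A, (Rle (M A) (I A)).

Definition rules_of V (P : cgap V) : gap V := fun r => List.In r (crules P).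

Definition sat_vc V (vc : list (nat * nat)) (I : interp V) : Prop :=
  forall v : V, exists i, (i < size vc)%N /\
    I (GVA (vc_b vc i) v) = I (GVA (vc_a vc i) v) /\
    forall j, (j < size vc)%N -> j <> i -> I (GVA (vc_b vc j) v) = R0.

Definition cgap_model V (P : cgap V) (I : interp V) : Prop :=
  gap_model (rules_of P) I /\ sat_vc (cvc P) I.

Definition copy_rule V (a b : nat) (v : V) : arule V :=
  ARule (VA b (TCst v)) (fun l => nth R0 l 0%N) [:: (VA a (TCst v), AVar 0)].

Definition coh V (P : cgap V) (I : interp V) : gap V :=
  fun r => rules_of P r \/
    exists (v : V) (i : nat), (i < size (cvc P))%N /\
      (Rlt R0 (I (GVA (vc_a (cvc P) i) v))) /\
      I (GVA (vc_a (cvc P) i) v) = I (GVA (vc_b (cvc P) i) v) /\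
      r = copy_rule (vc_a (cvc P) i) (vc_b (cvc P) i) v.

Definition coherent V (P : cgap V) (M : interp V) : Prop :=
  cgap_model P M /\ least_model (coh P M) M.

Definition sumR (l : list R) : R := foldr Rplus R0 l.
Definition maxR (l : list R) : R := foldr Rmax R0 l.

Definition strong_eq V (P : cgap V) (I : interp V) : Prop :=
  coherent P I /\
  forall v : V,
    sumR (map (fun ab => I (GVA ab.2 v)) (cvc P)) =
    maxR (map (fun ab => I (GVA ab.1 v)) (cvc P)).

(* Pi_S for a state S (S v is the 0-based index of the chosen option) *)
Definition inst_gap V (P : cgap V) (S : V -> nat) : gap V :=
  fun r => rules_of P r \/
    exists v : V, r = copy_rule (vc_a (cvc P) (S v)) (vc_b (cvc P) (S v)) v.

Definition deviate n m (s : {ffun 'I_n -> 'I_m}) (i : 'I_n) (a : 'I_m)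
  : {ffun 'I_n -> 'I_m} := [ffun j => if j == i then a else s j].

Definition nash n m (u : 'I_n -> {ffun 'I_n -> 'I_m} -> R)
  (s : {ffun 'I_n -> 'I_m}) : Prop :=
  forall (i : 'I_n) (a : 'I_m), (Rle (u i (deviate s i a)) (u i s)).

From Stdlib Require Import Reals Lra FunctionalExtensionality IndefiniteDescription.
From mathcomp Require Import all_boot.

Set Implicit Arguments.
Unset Strict Implicit.
Unset Printing Implicit Defensive.

(* Action j is encoded by the VC pair (a_j, b_j) = (j, m + j), and every a_j(v) is
   a fact with annotation 1, so the least model of Pi_s puts b_(s v)(v) at 1.  For
   every profile s, player v and action k a punishment rule derives b_k(v) : 1/2
   when k is a profitable deviation of v from s; its body b_(s w)(w) : 1 for all
   players w holds only in the least model of Pi_s, so the punishments of other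
   profiles never fire there.  Hence that model violates the VC rule at v (two
   nonzero b's) exactly when v can profitably deviate, and otherwise it is coherent
   with the b's summing to 1 = max of the a's.  Conversely, a strong equilibrium
   satisfies the VC rule with all a_j(v) = 1 > 0, so coh(Pi, I) is Pi_S for the
   state S it selects, and I is the least model of Pi_S. *)

Lemma InP (T : eqType) (x : T) (s : seq T) : reflect (List.In x s) (x \in s).
Proof.
elim: s => [|y s IH] /=; first by right.
rewrite in_cons; apply: (iffP orP) => [[/eqP ->|/IH]|[->|/IH]];
  by [left | right | rewrite eqxx; left | right].
Qed.

Lemma least_model_unique V (G : gap V) M1 M2 :
  least_model G M1 -> least_model G M2 -> M1 = M2.
Proof.
move=> [mod1 le1] [mod2 le2]; apply: functional_extensionality => A.
by apply: Rle_antisym; [apply: le1 | apply: le2].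
Qed.

Lemma least_model_ext V (G1 G2 : gap V) M :
  (forall r, G1 r <-> G2 r) -> least_model G1 M -> least_model G2 M.
Proof.
move=> eG [[vM satM] leM]; split; first by split=> // r /eG; apply: satM.
by move=> I [vI satI]; apply: leM; split=> // r /eG; apply: satI.
Qed.

Lemma inst_gap_model_rules V (P : cgap V) (S : V -> nat) (I : interp V) :
  gap_model (inst_gap P S) I -> gap_model (rules_of P) I.
Proof. by move=> [vI satI]; split=> // r Pr; apply: satI; left. Qed.

Section Coherence.
Variables (V : Type) (P : cgap V).
Local Notation vc := (cvc P).

Definition coh_active (I : interp V) (v : V) (i : nat) : Prop :=
  Rlt R0 (I (GVA (vc_a vc i) v)) /\ I (GVA (vc_a vc i) v) = I (GVA (vc_b vc i) v).

Lemma coh_inst_gap (I : interp V) (S : V -> nat) :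
  (forall v, S v < size vc) ->
  (forall v i, i < size vc -> coh_active I v i <-> i = S v) ->
  forall r, coh P I r <-> inst_gap P S r.
Proof.
move=> ltS activeS r; split=> [[Pr|[v [i [lti [act_pos [act_eq ->]]]]]]|[Pr|[v ->]]].
- by left.
- by right; exists v; rewrite (proj1 (activeS v i lti) (conj act_pos act_eq)).
- by left.
- right; exists v, (S v); split; first exact: ltS.
  by have [pos eq_ab] := proj2 (activeS v (S v) (ltS v)) erefl.
Qed.

Lemma coherent_of_inst_gap (I : interp V) (S : V -> nat) :
  (forall v, S v < size vc) ->
  (forall v i, i < size vc -> coh_active I v i <-> i = S v) ->
  least_model (inst_gap P S) I -> sat_vc vc I -> coherent P I.
Proof.
move=> ltS activeS leastI vcI; split.
  split=> //; exact: inst_gap_model_rules (proj1 leastI).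
exact: least_model_ext (fun r => iff_sym (coh_inst_gap ltS activeS r)) leastI.
Qed.

Lemma coherent_inst_gap (I : interp V) :
  coherent P I ->
  (forall v i, i < size vc -> Rlt R0 (I (GVA (vc_a vc i) v))) ->
  exists S : V -> nat, (forall v, S v < size vc) /\ least_model (inst_gap P S) I.
Proof.
move=> [[_ vcI] leastI] a_pos.
have [S chosen] := functional_choice _ vcI.
exists S; split=> [v|]; first by case: (chosen v).
apply: least_model_ext leastI; apply: coh_inst_gap => [v|v i lti]; first by case: (chosen v).
have [ltS [eqS zeroS]] := chosen v.
split=> [[pos eq_ab]|->]; last by split; [exact: a_pos | rewrite eqS].
case: (eqVneq i (S v)) => // /eqP neS; move: pos; rewrite eq_ab zeroS //; lra.
Qed.

End Coherence.

Lemma sat_vc_b_unique V (vc : list (nat * nat)) (I : interp V) (v : V) (i j : nat) :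
  sat_vc vc I -> i < size vc -> j < size vc ->
  I (GVA (vc_b vc i) v) <> R0 -> I (GVA (vc_b vc j) v) <> R0 -> i = j.
Proof.
move=> /(_ v) [k [_ [_ zero_k]]] lti ltj nzi nzj.
have at_k l : l < size vc -> I (GVA (vc_b vc l) v) <> R0 -> l = k.
  by move=> ltl nzl; case: (eqVneq l k) => // /eqP /(zero_k l ltl).
by rewrite (at_k i lti nzi) (at_k j ltj nzj).
Qed.

Lemma sumR_cons (x : R) (s : seq R) : sumR (x :: s) = Rplus x (sumR s).
Proof. by []. Qed.

Lemma sumR_iota_indicator (k a l : nat) :
  sumR [seq if j == k then R1 else R0 | j <- iota a l] =
  if a <= k < a + l then R1 else R0.
Proof.
elim: l a => [|l IH] a; first by rewrite addn0 ltnNge andbN.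
rewrite [iota _ _]/= map_cons sumR_cons IH -addSnnS; case: eqP => [<-|/eqP ak].
  by rewrite ltnn leqnn addSn ltnS leq_addr /=; lra.
by rewrite ltn_neqAle ak Rplus_0_l.
Qed.

Lemma in01_R0 : in01 R0.
Proof. by split; lra. Qed.

Lemma in01_R1 : in01 R1.
Proof. by split; lra. Qed.

Lemma fun01_const (c : R) : in01 c -> fun01 (fun _ => c).
Proof. by move=> c01 xs _. Qed.

Lemma maxR_const1 (T : Type) (x : T) (l : seq T) : maxR [seq R1 | _ <- x :: l] = R1.
Proof.
elim: l x => [|y l IH] x; first by apply: Rmax_left; lra.
by change (Rmax R1 (maxR [seq R1 | _ <- y :: l]) = R1); rewrite IH; apply: Rmax_left; lra.
Qed.

Lemma deviate_self n m (s : {ffun 'I_n -> 'I_m}) (v : 'I_n) : deviate s v (s v) = s.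
Proof. by apply/ffunP => w; rewrite ffunE; case: eqP => [->|]. Qed.

Section GameEncoding.
Variables (n m : nat) (u : 'I_n -> {ffun 'I_n -> 'I_m} -> R).
Local Notation profile := {ffun 'I_n -> 'I_m}.

Definition punishment (s : profile) (v : 'I_n) (k : 'I_m) : R :=
  if Rlt_dec (u v s) (u v (deviate s v k)) then Rinv 2 else R0.

Definition action_fact (j : nat) : arule 'I_n :=
  ARule (VA j (TVar _ 0)) (fun _ => R1) [::].

Definition punish_rule (s : profile) (v : 'I_n) (k : 'I_m) : arule 'I_n :=
  ARule (VA (m + k) (TCst v)) (fun _ => punishment s v k)
    (List.map (fun w => (VA (m + s w) (TCst w), ACst R1)) (enum 'I_n)).

Definition game_vc : list (nat * nat) := [seq (j, m + j) | j <- iota 0 m].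

Definition game_cgap : cgap 'I_n :=
  CGap (List.map action_fact (iota 0 m) ++
        List.map (fun '(s, v, k) => punish_rule s v k) (enum {: profile * 'I_n * 'I_m}))
       game_vc.

Definition choice_value (s : profile) (v : 'I_n) (k : 'I_m) : R :=
  if k == s v then R1 else punishment s v k.

Definition state_model (s : profile) : interp 'I_n := fun A =>
  match A with
  | GVA p v => if p < m then R1 else odflt R0 (omap (choice_value s v) (insub (p - m)))
  | GEA _ _ _ => R0
  end.

Lemma size_game_vc : size game_vc = m.
Proof. by rewrite size_map size_iota. Qed.

Lemma game_vc_a i : i < m -> vc_a game_vc i = i.
Proof. by move=> lti; rewrite /vc_a (nth_map 0) ?size_iota // nth_iota. Qed.

Lemma game_vc_b i : i < m -> vc_b game_vc i = m + i.
Proof. by move=> lti; rewrite /vc_b (nth_map 0) ?size_iota // nth_iota. Qed.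

Lemma punishment_range (s : profile) v k :
  Rle R0 (punishment s v k) /\ Rlt (punishment s v k) R1.
Proof. by rewrite /punishment; case: Rlt_dec => /= _; split; lra. Qed.

Lemma state_model_a (s : profile) j v : j < m -> state_model s (GVA j v) = R1.
Proof. by rewrite /= => ->. Qed.

Lemma state_model_b (s : profile) (k : 'I_m) v :
  state_model s (GVA (m + k) v) = choice_value s v k.
Proof. by rewrite /= ltnNge leq_addr /= addKn valK. Qed.

Lemma state_model_valid (s : profile) : valid (state_model s).
Proof.
case=> [p v|p v w] /=; last exact: in01_R0.
case: ifP => _; first exact: in01_R1.
case: insubP => [k _ _|_] /=; last exact: in01_R0.
have := punishment_range s v k; rewrite /choice_value; case: eqP => _ ?; split; lra.
Qed.

Lemma in_game_rules r : rules_of game_cgap r ->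
  (exists2 j, j < m & r = action_fact j) \/ exists s v k, r = punish_rule s v k.
Proof.
case/List.in_app_iff=> [/List.in_map_iff [j [<- /InP]]|/List.in_map_iff [[[s v] k] [<- _]]].
  by rewrite mem_iota => /andP [_ ltj]; left; exists j.
by right; exists s, v, k.
Qed.

Lemma action_fact_in j : j < m -> rules_of game_cgap (action_fact j).
Proof.
move=> ltj; apply/List.in_or_app; left; apply: List.in_map.
by apply/InP; rewrite mem_iota.
Qed.

Lemma punish_rule_in (s : profile) v k : rules_of game_cgap (punish_rule s v k).
Proof.
apply/List.in_or_app; right; apply: (List.in_map _ _ (s, v, k)).
by apply/InP; rewrite mem_enum.
Qed.

Lemma wf_game_cgap : wf_cgap game_cgap.
Proof.
move=> r /in_game_rules [[j _ ->]|[s [v [k ->]]]].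
  by split=> [|Am []]; apply: fun01_const; exact: in01_R1.
split; first by apply: fun01_const; have := punishment_range s v k; split; lra.
by move=> Am /List.in_map_iff [w [<- _]]; exact: in01_R1.
Qed.

Lemma state_model_b_ge1 (s : profile) (k : 'I_m) v :
  Rle R1 (state_model s (GVA (m + k) v)) -> k = s v.
Proof.
rewrite state_model_b /choice_value; case: eqP => // _.
by have := punishment_range s v k; lra.
Qed.

Lemma state_model_sat_rules (s : profile) r : rules_of game_cgap r -> sat_rule (state_model s) r.
Proof.
move=> /in_game_rules [[j ltj ->]|[s' [v [k ->]]]] th a _ body.
  by rewrite /= ltj; apply: Rle_refl.
have -> : s' = s.
  apply/ffunP => w; apply: state_model_b_ge1.
  apply: (body (VA (m + s' w) (TCst w), ACst R1)); apply: List.in_map.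
  by apply/InP; rewrite mem_enum.
change (Rle (punishment s v k) (state_model s (GVA (m + k) v))).
rewrite state_model_b /choice_value; case: eqP => _; last exact: Rle_refl.
by have := punishment_range s v k; lra.
Qed.

Lemma game_model_a I j v : gap_model (rules_of game_cgap) I -> j < m -> Rle R1 (I (GVA j v)).
Proof.
move=> [_ satI] ltj.
by apply: (satI _ (action_fact_in ltj) (fun _ => v) (fun _ => R0) (fun _ => in01_R0)) => Am [].
Qed.

Lemma inst_model_choice (s : profile) (I : interp 'I_n) (w : 'I_n) :
  gap_model (inst_gap game_cgap (fun v => nat_of_ord (s v))) I -> Rle R1 (I (GVA (m + s w) w)).
Proof.
move=> modI; have [_ satI] := modI.
have copy : inst_gap game_cgap (fun v => nat_of_ord (s v)) (copy_rule (s w) (m + s w) w).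
  by right; exists w; rewrite /= game_vc_a ?game_vc_b.
apply: (satI _ copy (fun _ => w) (fun _ => R1) (fun _ => in01_R1)) => Am [<-|[]].
exact: game_model_a (inst_gap_model_rules modI) (ltn_ord _).
Qed.

Lemma state_model_least (s : profile) :
  least_model (inst_gap game_cgap (fun v => nat_of_ord (s v))) (state_model s).
Proof.
split.
  split=> [|r [/state_model_sat_rules //|[v ->]]]; first exact: state_model_valid.
  rewrite /= game_vc_a ?game_vc_b // => th a a01 _.
  change (Rle (a 0) (state_model s (GVA (m + s v) v))).
  by rewrite state_model_b /choice_value eqxx; case: (a01 0).
move=> I modI [p v|p v w]; last by case: modI => /(_ (GEA p v w)) [].
have I_ge0 A : Rle R0 (I A) by case: modI => /(_ A) [].
rewrite /=; case: ifPn => [ltp|gep]; first exact: game_model_a (inst_gap_model_rules modI) ltp.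
case: insubP => [k _ def_k|_] /=; last exact: I_ge0.
have -> : p = m + k by rewrite def_k subnKC // leqNgt.
rewrite /choice_value; case: eqP => [->|_]; first exact: inst_model_choice modI.
have [_ satI] := modI.
apply: (satI _ (or_introl (punish_rule_in s v k)) (fun _ => v) (fun _ => R0) (fun _ => in01_R0))
  => Am /List.in_map_iff [w [<- _]].
exact: inst_model_choice modI.
Qed.

Lemma state_model_coh_active (s : profile) v i :
  i < m -> coh_active game_cgap (state_model s) v i <-> i = s v.
Proof.
move=> lti; rewrite /coh_active [cvc _]/= game_vc_a // game_vc_b // state_model_a //.
change i with (nat_of_ord (Ordinal lti)); rewrite state_model_b /choice_value.
case: eqP => [->|ne]; first by split=> // _; split; lra.
split=> [[_]|/val_inj //]; have := punishment_range s v (Ordinal lti); lra.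
Qed.

Lemma choice_value_nash (s : profile) v k :
  nash u s -> choice_value s v k = if k == s v then R1 else R0.
Proof.
move=> nash_s; rewrite /choice_value; case: eqP => // _.
by rewrite /punishment; case: Rlt_dec => //= gain; have := nash_s v k; lra.
Qed.

Lemma state_model_sat_vc_nash (s : profile) : sat_vc game_vc (state_model s) -> nash u s.
Proof.
move=> vc_s v k; apply: Rnot_lt_le => gain.
have /val_inj k_eq : nat_of_ord k = s v.
  apply: (sat_vc_b_unique (v := v) vc_s); rewrite ?size_game_vc ?ltn_ord // !game_vc_b //.
    rewrite state_model_b /choice_value /punishment; case: eqP => _; first lra.
    by case: Rlt_dec => [_|/(_ gain) []] /=; lra.
  by rewrite state_model_b /choice_value eqxx; lra.
by move: gain; rewrite k_eq deviate_self; apply: Rlt_irrefl.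
Qed.

Lemma state_model_sat_vc (s : profile) : nash u s -> sat_vc game_vc (state_model s).
Proof.
move=> nash_s v; exists (s v); rewrite size_game_vc ltn_ord game_vc_a // game_vc_b //.
rewrite state_model_b state_model_a // choice_value_nash // eqxx; do 2!split=> //.
move=> j ltj ne; rewrite game_vc_b //; change j with (nat_of_ord (Ordinal ltj)).
by rewrite state_model_b choice_value_nash // ifN_eq //; apply/eqP => /(congr1 val).
Qed.

Lemma state_model_balanced (s : profile) v : nash u s ->
  sumR [seq state_model s (GVA ab.2 v) | ab <- game_vc] =
  maxR [seq state_model s (GVA ab.1 v) | ab <- game_vc].
Proof.
move=> nash_s; rewrite -!map_comp.
have m_pos : 0 < m by apply: leq_ltn_trans (ltn_ord (s v)).
transitivity (sumR [seq if j == s v :> nat then R1 else R0 | j <- iota 0 m]).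
  congr sumR; apply/eq_in_map => j; rewrite mem_iota add0n => /andP [_ ltj].
  change (state_model s (GVA (m + Ordinal ltj) v) = if Ordinal ltj == s v :> nat then R1 else R0).
  by rewrite state_model_b choice_value_nash.
transitivity (maxR [seq R1 | _ <- iota 0 m]); last first.
  congr maxR; apply/eq_in_map => j; rewrite mem_iota add0n => /andP [_ ltj].
  exact/esym/(state_model_a s v ltj).
rewrite sumR_iota_indicator /= ltn_ord -(prednK m_pos); exact/esym/maxR_const1.
Qed.

End GameEncoding.

Theorem mainTheorem3 (n m : nat) (u : 'I_n -> {ffun 'I_n -> 'I_m} -> R) :
  exists P : cgap 'I_n,
    wf_cgap P /\ size (cvc P) = m /\
    (forall S : {ffun 'I_n -> 'I_m},
        exists M, least_model (inst_gap P (fun v => nat_of_ord (S v))) M) /\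
    (forall (S : {ffun 'I_n -> 'I_m}) (M : interp 'I_n),
        least_model (inst_gap P (fun v => nat_of_ord (S v))) M ->
        (strong_eq P M <-> nash u S)) /\
    (forall I : interp 'I_n, strong_eq P I ->
        exists S : {ffun 'I_n -> 'I_m},
          least_model (inst_gap P (fun v => nat_of_ord (S v))) I).
Proof.
exists (game_cgap u); split; first exact: wf_game_cgap.
split; first exact: size_game_vc.
split; first by move=> s; exists (state_model u s); exact: state_model_least.
split.
  move=> s M /least_model_unique /(_ (state_model_least u s)) ->.
  split=> [[[[_ vc_s] _] _]|nash_s]; first exact: state_model_sat_vc_nash.
  split; last by move=> v; exact: state_model_balanced.
  apply: coherent_of_inst_gap (state_model_least u s) (state_model_sat_vc nash_s) => [v|v i].
    by rewrite size_game_vc.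
  by rewrite size_game_vc; exact: state_model_coh_active.
move=> I [cohI _].
have [v i|t [ltt leastI]] := coherent_inst_gap cohI.
  rewrite size_game_vc => lti; rewrite [cvc _]/= game_vc_a //.
  by have := game_model_a v (proj1 (proj1 cohI)) lti; lra.
rewrite size_game_vc in ltt; exists [ffun v => Ordinal (ltt v)].
suff -> : (fun v => nat_of_ord ([ffun v => Ordinal (ltt v)] v)) = t by [].
by apply: functional_extensionality => v; rewrite ffunE.
Qed.
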